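(* For $x,y\ge 1$ and $n>x+y$, the maximum possible number of edges in a task-dependency graph produced by the $(x,y)$ edge-removal process on $n$ vertices is $2n-x-y-2$.
   Context: A task-dependency graph is a finite directed acyclic graph (no loops, no multiple edges). A vertex is initial if it has in-degree $0$ and terminal if it has out-degree $0$ (an isolated vertex is both). The $(x,y)$ edge-removal process on $n$ vertices: start with the task-dependency graph on $\{1,\dots,n\}$ having all edges $(a,b)$ with $a<b$. Edges are removed uniformly at random, one at a time; a removal that would cause more than $x$ initial vertices or more than $y$ terminal vertices is cancelled. The process terminates when no further edge can be removed; the produced graph is the final graph (over all possible runs). *)

From mathcomp Require Import all_boot.
Set Implicit Arguments. Unset Strict Implicit. Unset Printing Implicit Defensive.

(* Vertices are 'I_n (standing for 1..n); a graph is its edge set, a set of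
   ordered pairs (a,b) meaning the edge a -> b. *)
Definition graph (n : nat) := {set 'I_n * 'I_n}.

Definition complete_dag (n : nat) : graph n := [set e : 'I_n * 'I_n | (e.1 < e.2)%N].

Definition is_initial n (E : graph n) (v : 'I_n) : bool := [forall u, (u, v) \notin E].
Definition is_terminal n (E : graph n) (v : 'I_n) : bool := [forall w, (v, w) \notin E].

Definition num_initial n (E : graph n) : nat := #|[set v | is_initial E v]|.
Definition num_terminal n (E : graph n) : nat := #|[set v | is_terminal E v]|.

Definition admissible (x y : nat) n (E : graph n) : bool :=
  (num_initial E <= x) && (num_terminal E <= y).

(* one non-cancelled removal step of the (x,y) edge-removal process *)
Definition removal_step (x y : nat) n (E E' : graph n) : Prop :=
  exists e, e \in E /\ E' = E :\ e /\ admissible x y E'.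

Inductive reachable (x y n : nat) : graph n -> Prop :=
| reach_start : reachable x y (complete_dag n)
| reach_step : forall E E', reachable x y E -> removal_step x y E E' -> reachable x y E'.

Definition final_graph (x y n : nat) (E : graph n) : Prop :=
  reachable x y E /\ ~ (exists E', removal_step x y E E').

From mathcomp Require Import all_boot zify.
Set Implicit Arguments. Unset Strict Implicit. Unset Printing Implicit Defensive.

(* A cancelled removal of a -> b means that b has no other in-edge and there are already
   x initial vertices, or that a has no other out-edge and there are already y terminal
   vertices.  In a final graph, charging each edge to its head in the first case and to
   its tail in the second is injective into the non-initial, resp. non-terminal,
   vertices, of which there are n - x, resp. n - y, once any edge is charged that way.
   Since x + y < n, some vertex c is neither initial nor terminal; either c is an
   uncharged non-initial vertex, or it is the head of a charged edge u -> c whose tail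
   u < c is an uncharged non-terminal vertex, and symmetrically on the out-side with
   some z > c.  So two slots stay unused and |E| <= 2n - x - y - 2.  The bound is
   attained by the edges 1 -> v for x < v < n and v -> n for 1 < v <= n - y. *)

Section InitialTerminal.
Variable n : nat.
Implicit Types (E F : graph n) (a b : 'I_n).

Definition initials E := [set v | is_initial E v].
Definition terminals E := [set v | is_terminal E v].

Definition sole_in_edge E a b := [forall u, ((u, b) \in E) ==> (u == a)].
Definition sole_out_edge E a b := [forall w, ((a, w) \in E) ==> (w == b)].

Lemma sub_initials E F : F \subset E -> initials E \subset initials F.
Proof.
move=> sFE; apply/subsetP => v; rewrite !inE => /forallP nE.
by apply/forallP => u; apply: contra (nE u); apply: (subsetP sFE).
Qed.

Lemma sub_terminals E F : F \subset E -> terminals E \subset terminals F.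
Proof.
move=> sFE; apply/subsetP => v; rewrite !inE => /forallP nE.
by apply/forallP => w; apply: contra (nE w); apply: (subsetP sFE).
Qed.

Lemma admissibleS x y E F : F \subset E -> admissible x y F -> admissible x y E.
Proof.
move=> sFE /andP[iF tF]; apply/andP; split.
  exact: leq_trans (subset_leq_card (sub_initials sFE)) iF.
exact: leq_trans (subset_leq_card (sub_terminals sFE)) tF.
Qed.

Lemma num_initial_setD1 E a b : (a, b) \in E ->
  num_initial (E :\ (a, b)) = sole_in_edge E a b + num_initial E.
Proof.
move=> abE; have b_new : (b \in initials (E :\ (a, b))) = sole_in_edge E a b.
  rewrite inE; apply: eq_forallb => u.
  by rewrite !inE xpair_eqE eqxx andbT negb_and negbK implybE orbC.
have b_old : b \notin initials E.
  by rewrite inE negb_forall; apply/existsP; exists a; rewrite negbK.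
rewrite /num_initial -!/(initials _) (cardsD1 b (initials E)) (negbTE b_old).
rewrite (cardsD1 b) b_new; congr (_ + _); apply: eq_card => v; rewrite !inE.
case: eqP => //= /eqP vb; apply: eq_forallb => u.
by rewrite !inE xpair_eqE (negbTE vb) andbF.
Qed.

Lemma num_terminal_setD1 E a b : (a, b) \in E ->
  num_terminal (E :\ (a, b)) = sole_out_edge E a b + num_terminal E.
Proof.
move=> abE; have a_new : (a \in terminals (E :\ (a, b))) = sole_out_edge E a b.
  rewrite inE; apply: eq_forallb => w.
  by rewrite !inE xpair_eqE eqxx negb_and negbK implybE orbC.
have a_old : a \notin terminals E.
  by rewrite inE negb_forall; apply/existsP; exists b; rewrite negbK.
rewrite /num_terminal -!/(terminals _) (cardsD1 a (terminals E)) (negbTE a_old).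
rewrite (cardsD1 a) a_new; congr (_ + _); apply: eq_card => v; rewrite !inE.
case: eqP => //= /eqP va; apply: eq_forallb => w.
by rewrite !inE xpair_eqE (negbTE va).
Qed.

Lemma blocked_edge x y E a b : (a, b) \in E -> admissible x y E ->
    ~~ admissible x y (E :\ (a, b)) ->
  sole_in_edge E a b && (num_initial E == x) ||
  sole_out_edge E a b && (num_terminal E == y).
Proof.
move=> abE /andP[iE tE]; rewrite /admissible num_initial_setD1 // num_terminal_setD1 //.
by case: sole_in_edge; case: sole_out_edge => /=; lia.
Qed.

Lemma exists_inner_vertex E : num_initial E + num_terminal E < n ->
  exists c, (c \notin initials E) && (c \notin terminals E).
Proof.
move=> few; apply/existsP; apply: contraTT few => /existsPn IT.
rewrite -leqNgt -[n in n <= _]card_ord -cardsT.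
apply: leq_trans (leq_card_setU _ _).1; apply/subset_leq_card/subsetP => c _.
by move: (IT c); rewrite in_setU negb_and !negbK.
Qed.

Lemma num_initial_complete_dag : num_initial (complete_dag n) <= 1.
Proof.
have val0 v : v \in initials (complete_dag n) -> val v = 0.
  have first_lt : 0 < n by move: (ltn_ord v); lia.
  by rewrite inE => /forallP/(_ (Ordinal first_lt)); rewrite inE /=; lia.
by apply/card_le1_eqP => u v /val0 u0 /val0 v0; apply: val_inj; rewrite /= u0 v0.
Qed.

Lemma num_terminal_complete_dag : num_terminal (complete_dag n) <= 1.
Proof.
have val_last v : v \in terminals (complete_dag n) -> val v = n.-1.
  have last_lt : n.-1 < n by move: (ltn_ord v); lia.
  by rewrite inE => /forallP/(_ (Ordinal last_lt)); rewrite inE /=; move: (ltn_ord v); lia.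
by apply/card_le1_eqP => u v /val_last u0 /val_last v0; apply: val_inj; rewrite /= u0 v0.
Qed.

End InitialTerminal.

Section Reachability.
Variables x y n : nat.
Implicit Types E F G : graph n.

Lemma reachable_between F G : admissible x y F ->
  F \subset G -> G \subset complete_dag n -> reachable x y G.
Proof.
move=> admF; have [k] := ubnP #|complete_dag n :\: G|.
elim: k G => // k IHk G missing sFG sGD.
have [Dsub|[e]] := set_0Vmem (complete_dag n :\: G).
  suff -> : G = complete_dag n by exact: reach_start.
  by apply/eqP; rewrite eqEsubset sGD -setD_eq0 Dsub eqxx.
case/setDP => eD eG.
apply: (@reach_step _ _ _ (e |: G)).
  apply: IHk; last by rewrite subUset sub1set eD.
    apply: leq_trans (proper_card _) missing.
    by rewrite setUC -setDDl properD1 //; apply/setDP.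
  exact: subset_trans sFG (subsetUr _ _).
exists e; rewrite setU11 setU1K //; split=> //; split=> //.
exact: admissibleS admF.
Qed.

Hypotheses (x_gt0 : 0 < x) (y_gt0 : 0 < y).

Lemma reachableP E :
  reachable x y E <-> E \subset complete_dag n /\ admissible x y E.
Proof.
split; last by case=> sED admE; apply: reachable_between admE (subxx E) sED.
elim=> [|F G _ [sFD _] [e [_ [-> admG]]]].
  split=> //; apply/andP; split.
    exact: leq_trans (num_initial_complete_dag n) x_gt0.
  exact: leq_trans (num_terminal_complete_dag n) y_gt0.
by split=> //; apply: subset_trans (subsetDl _ _) sFD.
Qed.

Lemma final_graphP E : final_graph x y E <->
  [/\ E \subset complete_dag n, admissible x y E &
      forall e, e \in E -> ~~ admissible x y (E :\ e)].
Proof.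
rewrite /final_graph reachableP; split.
  case=> [[sED admE] stuck]; split=> // e eE; apply/negP => admEe.
  by apply: stuck; exists (E :\ e), e.
case=> sED admE stuck; split=> // [[_ [e [eE [-> admEe]]]]].
by move: (stuck e eE); rewrite admEe.
Qed.

End Reachability.

Section UpperBound.
Variables (x y n : nat) (E : graph n).
Hypotheses (E_dag : E \subset complete_dag n) (E_adm : admissible x y E)
  (E_stuck : forall e, e \in E -> ~~ admissible x y (E :\ e)).

Let Ein := [set e in E | sole_in_edge E e.1 e.2 && (num_initial E == x)].
Let Eout := E :\: Ein.
Let heads := [set e.2 | e in Ein].
Let tails := [set e.1 | e in Eout].

Let edge_lt a b : (a, b) \in E -> a < b.
Proof. by move/(subsetP E_dag); rewrite inE. Qed.

Let EinP a b : (a, b) \in Ein ->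
  [/\ (a, b) \in E, sole_in_edge E a b & num_initial E = x].
Proof. by rewrite inE => /and3P[-> -> /eqP]. Qed.

Let EoutP a b : (a, b) \in Eout ->
  [/\ (a, b) \in E, sole_out_edge E a b & num_terminal E = y].
Proof.
case/setDP=> abE /negbTE notin; have := blocked_edge abE E_adm (E_stuck abE).
by move: notin; rewrite inE abE /= => -> /= /andP[-> /eqP].
Qed.

Let card_edges : #|E| = #|heads| + #|tails|.
Proof.
have EinE : Ein \subset E by apply/subsetP => e; rewrite inE => /andP[].
rewrite !card_in_imset; first by rewrite -(cardsID Ein E) (setIidPr EinE).
  move=> [a b] [a' b'] /EoutP[abE /forall_inP out_a _] /EoutP[abE' _ _] /= aa'.
  by rewrite -aa' in abE' *; rewrite (eqP (out_a _ abE')).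
move=> [a b] [a' b'] /EinP[abE /forall_inP in_b _] /EinP[abE' _ _] /= bb'.
by rewrite -bb' in abE' *; rewrite (eqP (in_b _ abE')).
Qed.

Let heads_sub : heads \subset ~: initials E.
Proof.
apply/subsetP => _ /imsetP[[a b] /EinP[abE _ _] ->].
by rewrite !inE negb_forall; apply/existsP; exists a; rewrite negbK.
Qed.

Let tails_sub : tails \subset ~: terminals E.
Proof.
apply/subsetP => _ /imsetP[[a b] /EoutP[abE _ _] ->].
by rewrite !inE negb_forall; apply/existsP; exists b; rewrite negbK.
Qed.

Let spare_tail u w : (u, w) \in Ein -> u \in ~: terminals E :\: tails.
Proof.
move=> uwin; have [uwE _ _] := EinP uwin; rewrite !inE negb_forall andbC.
apply/andP; split; first by apply/existsP; exists w; rewrite negbK.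
apply/negP => /imsetP[[a b] about /= ua]; subst u.
have [_ /forall_inP out_a _] := EoutP about.
by move: about; rewrite -(eqP (out_a _ uwE)) => /setDP[_]; rewrite uwin.
Qed.

Let spare_head v z : (v, z) \in Eout -> z \in ~: initials E :\: heads.
Proof.
move=> vzout; have [vzE _ _] := EoutP vzout; rewrite !inE negb_forall andbC.
apply/andP; split; first by apply/existsP; exists v; rewrite negbK.
apply/negP => /imsetP[[a b] abin /= zb]; subst z.
have [_ /forall_inP in_b _] := EinP abin.
by move: vzout; rewrite (eqP (in_b _ vzE)) => /setDP[_]; rewrite abin.
Qed.

Let deficit : num_initial E + num_terminal E < n ->
  2 <= #|~: initials E :\: heads| + #|~: terminals E :\: tails|.
Proof.
move=> few; have [c /andP[cI cT]] := exists_inner_vertex few.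
have spare_before : c \in ~: initials E :\: heads \/
    exists2 u, u \in ~: terminals E :\: tails & u < c.
  case: (boolP (c \in heads)) => [/imsetP[[u w] uwin /= cw] | ch].
    right; exists u; first exact: spare_tail uwin.
    by case: (EinP uwin); rewrite cw => /edge_lt.
  by left; rewrite in_setD in_setC ch cI.
have spare_after : c \in ~: terminals E :\: tails \/
    exists2 z, z \in ~: initials E :\: heads & c < z.
  case: (boolP (c \in tails)) => [/imsetP[[v z] vzout /= cv] | ct].
    right; exists z; first exact: spare_head vzout.
    by case: (EoutP vzout); rewrite cv => /edge_lt.
  by left; rewrite in_setD in_setC ct cT.
have card_pos (S : {set 'I_n}) v : v \in S -> 0 < #|S|.
  by move=> vS; apply/card_gt0P; exists v.
have card_two (S : {set 'I_n}) (v w : 'I_n) : v \in S -> w \in S -> v < w -> 1 < #|S|.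
  move=> vS wS vw; apply/card_gt1P; exists v, w; split=> //.
  by apply: contraTneq vw => ->; rewrite ltnn.
case: spare_before => [cA | [u uB uc]]; case: spare_after => [cB | [z zA cz]].
- exact: leq_add (card_pos _ _ cA) (card_pos _ _ cB).
- exact: leq_trans (card_two _ _ _ cA zA cz) (leq_addr _ _).
- exact: leq_trans (card_two _ _ _ uB cB uc) (leq_addl _ _).
- exact: leq_add (card_pos _ _ zA) (card_pos _ _ uB).
Qed.

Lemma card_stuck_graph_le :
  0 < x -> 0 < y -> x + y < n -> #|E| <= 2 * n - x - y - 2.
Proof.
move=> x_gt0 y_gt0 xy; have /andP[iE tE] := E_adm.
have := deficit (leq_ltn_trans (leq_add iE tE) xy).
have cardC (S : {set 'I_n}) : #|~: S| = n - #|S| by rewrite cardsCs setCK card_ord.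
move: (cardsID heads (~: initials E)) (cardsID tails (~: terminals E)).
rewrite (setIidPr heads_sub) (setIidPr tails_sub) !cardC card_edges.
rewrite -[#|initials E|]/(num_initial E) -[#|terminals E|]/(num_terminal E).
case: (eqVneq heads set0) => [-> | /set0Pn[_ /imsetP[[a b] /EinP[_ _ ix] _]]];
  case: (eqVneq tails set0) => [-> | /set0Pn[_ /imsetP[[c d] /EoutP[_ _ ty] _]]];
  rewrite ?cards0; lia.
Qed.

End UpperBound.

Lemma card_ord_interval m lo hi :
  hi <= m -> #|[set i : 'I_m | lo <= i < hi]| = hi - lo.
Proof.
elim: hi => [|hi IHhi] hi_m.
  by apply/eqP; rewrite cards_eq0; apply/eqP/setP => i; rewrite !inE ltn0 andbF.
have [lo_hi | hi_lo] := leqP lo hi.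
  have -> : [set i : 'I_m | lo <= i < hi.+1]
             = Ordinal hi_m |: [set i : 'I_m | lo <= i < hi].
    by apply/setP => i; rewrite !inE -val_eqE /=; lia.
  by rewrite cardsU1 IHhi ?inE ?ltnn ?andbF //=; lia.
have -> : [set i : 'I_m | lo <= i < hi.+1] = [set i : 'I_m | lo <= i < hi].
  by apply/setP => i; rewrite !inE; lia.
by rewrite IHhi //; lia.
Qed.

Section FanGraph.
Variables x y n : nat.

Definition fan_graph : graph n.+1 :=
  [set e : 'I_n.+1 * 'I_n.+1 | (e.1 == 0 :> nat) && (x <= e.2 < n)
                               || (e.2 == n :> nat) && (0 < e.1 < n.+1 - y)].

Lemma fan_sub_dag : 0 < x -> 0 < y -> fan_graph \subset complete_dag n.+1.
Proof.
by move=> x_gt0 y_gt0; apply/subsetP => -[a b]; rewrite !inE /=; move: (ltn_ord a); lia.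
Qed.

Lemma fan_edge_sole a b : (a, b) \in fan_graph ->
  sole_in_edge fan_graph a b || sole_out_edge fan_graph a b.
Proof.
rewrite inE /= => /orP[/andP[a0 bx] | /andP[bn ay]].
  by apply/orP; left; apply/forall_inP => u; rewrite inE -val_eqE /=; lia.
by apply/orP; right; apply/forall_inP => w; rewrite inE -val_eqE /=; lia.
Qed.

Hypothesis xy : x + y <= n.

Lemma card_fan : #|fan_graph| = 2 * n.+1 - x - y - 2.
Proof.
pose sources := [set a : 'I_n.+1 | 1 <= a < n.+1 - y].
pose targets := [set b : 'I_n.+1 | x <= b < n].
have -> : fan_graph = [set (ord0, b) | b in targets] :|: [set (a, ord_max) | a in sources].
  apply/setP => -[a b]; rewrite !inE /=; apply/idP/idP.
    case/orP=> /andP[/eqP a0 ab]; apply/orP; [left | right]; apply/imsetP;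
      [exists b | exists a]; rewrite ?inE //; congr pair; exact: val_inj.
  by case/orP => /imsetP[c]; rewrite inE => cS [-> ->] /=; lia.
rewrite cardsU disjoint_setI0 ?cards0.
  rewrite !card_imset => [|? ? []|? ? []] //.
  by rewrite !card_ord_interval; lia.
rewrite -setI_eq0; apply/eqP/setP => e; rewrite !inE.
apply/andP => -[/imsetP[b bS ->] /imsetP[a _ [_ bn]]].
by move: bS; rewrite inE bn /=; lia.
Qed.

Lemma num_initial_fan : 0 < x -> num_initial fan_graph = x.
Proof.
move=> x_gt0; have one_lt : 1 < n.+1 by lia.
have -> : num_initial fan_graph = #|[set v : 'I_n.+1 | 0 <= v < x]|.
  apply: eq_card => v; rewrite !inE; apply/forallP/idP => [no_in | vx u].
    by move: (no_in ord0) (no_in (inord 1)) (ltn_ord v); rewrite !inE /= inordK //; lia.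
  by rewrite inE /=; lia.
by rewrite card_ord_interval; lia.
Qed.

Lemma num_terminal_fan : 0 < y -> num_terminal fan_graph = y.
Proof.
move=> y_gt0; have x_lt : x < n.+1 by lia.
have -> : num_terminal fan_graph = #|[set v : 'I_n.+1 | n.+1 - y <= v < n.+1]|.
  apply: eq_card => v; rewrite !inE ltn_ord andbT; apply/forallP/idP => [no_out | yv w].
    by move: (no_out ord_max) (no_out (inord x)); rewrite !inE /= inordK //; lia.
  by rewrite inE /=; lia.
by rewrite card_ord_interval; lia.
Qed.

Hypotheses (x_gt0 : 0 < x) (y_gt0 : 0 < y).

Lemma fan_admissible : admissible x y fan_graph.
Proof. by rewrite /admissible num_initial_fan // num_terminal_fan // !leqnn. Qed.

Lemma fan_stuck e : e \in fan_graph -> ~~ admissible x y (fan_graph :\ e).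
Proof.
case: e => a b abF; rewrite /admissible num_initial_setD1 // num_terminal_setD1 //.
by rewrite num_initial_fan // num_terminal_fan //; case/orP: (fan_edge_sole abF) => ->; lia.
Qed.

End FanGraph.

Theorem mainTheorem7 (x y n : nat) :
  (1 <= x)%N -> (1 <= y)%N -> (x + y < n)%N ->
  (exists E : graph n, final_graph x y E /\ #|E| = (2 * n - x - y - 2)%N) /\
  (forall E : graph n, final_graph x y E -> (#|E| <= 2 * n - x - y - 2)%N).
Proof.
move=> x_gt0 y_gt0; case: n => [//|n] xy; split.
  exists (fan_graph x y n); split; last by apply: card_fan.
  apply/final_graphP => //; split; first exact: fan_sub_dag.
    exact: fan_admissible.
  exact: fan_stuck.
by move=> E /final_graphP[] // E_dag E_adm E_stuck; apply: card_stuck_graph_le.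
Qed.
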